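(* Let $c,d,d_1,d_2\in\mathbb{Z}$ and $T=T(c,d,d_1,d_2)$, i.e. $T_{r,k}=c+kd_1+rd_2+rkd$ for all $r,k\ge 0$. (i) (Odd Diamond Pattern) For all integers $r,k\ge 0$ and $n\ge 1$, $$\frac{\sum_{i=0}^{2n-1}T_{r+i,k}+\sum_{i=0}^{2n-1}T_{r+2n,k+i}+\sum_{i=0}^{2n-1}T_{r+2n-i,k+2n}+\sum_{i=0}^{2n-1}T_{r,k+2n-i}}{8n}=T_{r+n,k+n};$$ that is, the average of the $8n$ entries on the boundary of the diamond with corners $T_{r,k},T_{r+2n,k},T_{r+2n,k+2n},T_{r,k+2n}$ equals its middle entry. (ii) (Even Diamond Pattern) For all integers $r,k\ge 0$ and $n\ge 1$ with $n\le\min\{r,k\}$, $$\frac{\sum_{i=0}^{2n-2}\left(T_{r-n+1+i,\,k-n+1}+T_{r+n,\,k-n+1+i}+T_{r+n-i,\,k+n}+T_{r-n+1,\,k+n-i}\right)}{8n-4}=\frac{T_{r,k}+T_{r+1,k}+T_{r+1,k+1}+T_{r,k+1}}{4};$$ that is, the average of the $8n-4$ entries on the boundary of the diamond with corners $T_{r-n+1,k-n+1},T_{r+n,k-n+1},T_{r+n,k+n},T_{r-n+1,k+n}$ equals the average of the four entries $T_{r,k},T_{r+1,k},T_{r+1,k+1},T_{r,k+1}$.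
   Context: A number triangle is an array of integers $T_{r,k}$ indexed by integers $r,k\ge 0$ ($T_{r,k}$ the $k$-th entry of the $r$-th major diagonal). For $c,d,d_1,d_2\in\mathbb{Z}$, the Generalized Rascal Triangle $T(c,d,d_1,d_2)$ is the number triangle with $T_{r,k}=c+kd_1+rd_2+rkd$. *)

From mathcomp Require Import all_boot all_order all_algebra.
Set Implicit Arguments. Unset Strict Implicit. Unset Printing Implicit Defensive.
Import Order.TTheory GRing.Theory Num.Theory.
Local Open Scope ring_scope.

Definition rascalT (c d d1 d2 : int) (r k : nat) : int :=
  c + (k%:Z) * d1 + (r%:Z) * d2 + (r%:Z) * (k%:Z) * d.

From mathcomp Require Import all_boot all_order all_algebra.
From mathcomp Require Import ring lra zify.
Set Implicit Arguments. Unset Strict Implicit. Unset Printing Implicit Defensive.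
Import Order.TTheory GRing.Theory Num.Theory.
Local Open Scope ring_scope.

(* Extend T to the bilinear function [rascal] of two variables. Along an
   axis-parallel side it is affine, and on a square the increments of the four
   sides cancel, so the i-th terms of the four sides always add up to the four
   corners: the boundary sum is m times the corner sum.  By bilinearity, the
   average of the corners of a square is the value at its centre, which is the
   lattice point (r+n, k+n) in the odd pattern and (r+1/2, k+1/2), the centre of
   the unit square on the right-hand side, in the even one. *)

Definition rascal (R : comPzRingType) (c d d1 d2 x y : R) : R :=
  c + y * d1 + x * d2 + x * y * d.

Lemma rascalT_intr (R : comPzRingType) (c d d1 d2 : int) (r k : nat) :
  (rascalT c d d1 d2 r k)%:~R = rascal c%:~R d%:~R d1%:~R d2%:~R r%:R k%:R :> R.
Proof. by rewrite /rascalT /rascal !rmorphD !rmorphM /= !pmulrn. Qed.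

Section SquareBoundary.

Variables (R : comPzRingType) (c d d1 d2 : R).
Local Notation f := (rascal c d d1 d2).

Lemma rascal_boundary_shift (x y s t : R) :
  f (x + t) y + f (x + s) (y + t) + f (x + s - t) (y + s) + f x (y + s - t)
  = f x y + f (x + s) y + f (x + s) (y + s) + f x (y + s).
Proof. rewrite /rascal; ring. Qed.

Variable T : nat -> nat -> R.
Hypothesis TE : forall r k, T r k = f r%:R k%:R.

Lemma sum_square_boundary (r k m : nat) :
  \sum_(0 <= i < m)
     (T (r + i) k + T (r + m) (k + i) + T (r + m - i) (k + m) + T r (k + m - i))
  = m%:R * (T r k + T (r + m) k + T (r + m) (k + m) + T r (k + m)).
Proof.
rewrite mulr_natl; set corners := (X in X *+ m).
rewrite -[m in _ *+ m]subn0 -sumr_const_nat.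
apply: eq_big_nat => i /andP[_ /ltnW le_im].
have le_i_rm : (i <= r + m)%N by rewrite (leq_trans le_im) ?leq_addl.
have le_i_km : (i <= k + m)%N by rewrite (leq_trans le_im) ?leq_addl.
by rewrite /corners !TE (natrB _ le_i_rm) (natrB _ le_i_km) !natrD rascal_boundary_shift.
Qed.

End SquareBoundary.

Lemma rascal_corners (F : numFieldType) (c d d1 d2 x y s : F) :
  (rascal c d d1 d2 x y + rascal c d d1 d2 (x + s) y
   + rascal c d d1 d2 (x + s) (y + s) + rascal c d d1 d2 x (y + s)) / 4
  = rascal c d d1 d2 (x + s / 2) (y + s / 2).
Proof. by rewrite /rascal; field. Qed.

Lemma mulr_natl_div4n (F : numFieldType) (m : nat) (a : F) :
  (0 < m)%N -> m%:R * a / (4 * m)%:R = a / 4.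
Proof.
by move=> m_gt0; rewrite natrM; field; rewrite pnatr_eq0 -lt0n.
Qed.

Theorem mainTheorem9 (c d d1 d2 : int) :
  let T := fun r k : nat => ((rascalT c d d1 d2 r k)%:~R : rat) in
  (forall (r k n : nat), (1 <= n)%N ->
     (\sum_(0 <= i < 2 * n) T (r + i)%N k
      + \sum_(0 <= i < 2 * n) T (r + 2 * n)%N (k + i)%N
      + \sum_(0 <= i < 2 * n) T (r + 2 * n - i)%N (k + 2 * n)%N
      + \sum_(0 <= i < 2 * n) T r (k + 2 * n - i)%N) / (8 * n)%:R
     = T (r + n)%N (k + n)%N)
  /\
  (forall (r k n : nat), (1 <= n)%N -> (n <= minn r k)%N ->
     (\sum_(0 <= i < 2 * n - 1)
        (T (r - n + 1 + i)%N (k - n + 1)%N + T (r + n)%N (k - n + 1 + i)%N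
         + T (r + n - i)%N (k + n)%N + T (r - n + 1)%N (k + n - i)%N))
       / (8 * n - 4)%:R
     = (T r k + T r.+1 k + T r.+1 k.+1 + T r k.+1) / 4).
Proof.
move=> T; have TE r k : T r k = rascal c%:~R d%:~R d1%:~R d2%:~R r%:R k%:R.
  exact: rascalT_intr.
split=> [r k n n_gt0 | r k n n_gt0].
- rewrite -!big_split /= (sum_square_boundary TE) (_ : 8 * n = 4 * (2 * n))%N; last by lia.
  rewrite mulr_natl_div4n ?muln_gt0 // !TE !(natrD _ r) !(natrD _ k) rascal_corners.
  by rewrite natrM mulrAC divff ?mul1r.
- rewrite leq_min => /andP[n_le_r n_le_k].
  set m := (2 * n - 1)%N; set r0 := (r - n + 1)%N; set k0 := (k - n + 1)%N.
  have [r_eq k_eq] : (r + n = r0 + m)%N /\ (k + n = k0 + m)%N by rewrite /m /r0 /k0; lia.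
  rewrite r_eq k_eq (sum_square_boundary TE) (_ : 8 * n - 4 = 4 * m)%N; last by rewrite /m; lia.
  have centre x x0 : (x + n = x0 + m)%N -> x0%:R + m%:R / 2 = x%:R + 1 / 2 :> rat.
    move=> x_eq; have : (x0 + x0 + m = x + x + 1)%N by rewrite /m; lia.
    by move/(congr1 (GRing.natmul (1 : rat))); rewrite !natrD; lra.
  rewrite mulr_natl_div4n; last by rewrite /m; lia.
  rewrite !TE -(addn1 r) -(addn1 k) !(natrD _ r0) !(natrD _ k0) !(natrD _ r) !(natrD _ k).
  by rewrite !rascal_corners (centre r r0 r_eq) (centre k k0 k_eq).
Qed.
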